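(* Let $\mathfrak{k}$ be a field, $n\ge 2$, $r_1,\dots,r_n$ positive integers, ${\bf B}=\{(i_1,\dots,i_n):1\le i_j\le r_j\}$, and ${\mathcal A}=(x_{i_1\ldots i_n})_{(i_1,\ldots,i_n)\in{\bf B}}$ a box-shaped matrix of distinct indeterminates, with polynomial ring $\mathfrak{k}[{\mathcal A}]$. For $l=1,\dots,n$ let ${\mathcal A}_l=(x_{i_1\ldots i_n})_{(i_1,\ldots,i_n)\in{\bf B},\ i_l<r_l}$, ${\bf B}_l=\{(i_1,\dots,i_n)\in{\bf B}: i_l=r_l\}$, and $I_l=I_2({\mathcal A}_l)\mathfrak{k}[{\mathcal A}]+(x_{i_1\ldots i_n}:(i_1,\dots,i_n)\in{\bf B}_l)$. Then: (a) for any $l\neq s$ in $\{1,\dots,n\}$, $I_l\cap I_s=I_2({\mathcal A})+(x_{i_1\ldots i_n}:(i_1,\dots,i_n)\in{\bf B}_l\cap{\bf B}_s)$; (b) for any distinct $l_1,\dots,l_t\in\{1,\dots,n\}$ with $2\le t\le n$, $\bigcap_{j=1}^t I_{l_j}=I_2({\mathcal A})+(x_{i_1\ldots i_n}:(i_1,\dots,i_n)\in\bigcap_{j=1}^t{\bf B}_{l_j})$.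
   Context: $\mathfrak{k}$ is algebraically closed of characteristic $0$. For a box-shaped matrix $(a_{i_1\ldots i_n})$ indexed by a box of integral points, a $2\times2$ minor about the $l$-th coordinate is $a_{i_1\ldots i_l\ldots i_n}a_{j_1\ldots j_l\ldots j_n}-a_{i_1\ldots i_{l-1}j_li_{l+1}\ldots i_n}a_{j_1\ldots j_{l-1}i_lj_{l+1}\ldots j_n}$ for two index points; the ideal of $2\times2$ minors $I_2(\cdot)$ is generated by the $2\times 2$ minors about all coordinates. *)

From HB Require Import structures.
From mathcomp Require Import all_boot all_order all_algebra.
From mathcomp Require Import mpoly.
Set Implicit Arguments. Unset Strict Implicit. Unset Printing Implicit Defensive.
Import GRing.Theory.
Local Open Scope ring_scope.

(* Index points of the box B = prod_j {0,...,r j - 1} (0-based indices). *)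
Definition box (n : nat) (r : 'I_n -> nat) : finType :=
  {dffun forall j : 'I_n, 'I_(r j)}.

Definition polyA (k : fieldType) (n : nat) (r : 'I_n -> nat) :=
  {mpoly k[#|box r|]}.

Definition xvar (k : fieldType) (n : nat) (r : 'I_n -> nat) (p : box r)
  : polyA k r := 'X_(enum_rank p).

Definition swapc (n : nat) (r : 'I_n -> nat) (p q : box r) (m : 'I_n) : box r :=
  finfun (fun j => if j == m then q j else p j).

Definition ideal_gen (R : comNzRingType) (S : R -> Prop) (x : R) : Prop :=
  exists s : seq (R * R), (forall c, c \in s -> S c.2) /\
    x = \sum_(c <- s) c.1 * c.2.

(* 2x2 minors (about every coordinate) of the sub-box-matrix with index set
   P (P is always a product of intervals below, hence closed under swapc). *)
Definition minor2 (k : fieldType) (n : nat) (r : 'I_n -> nat)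
  (P : pred (box r)) (f : polyA k r) : Prop :=
  exists p q m, P p /\ P q /\
    f = xvar k p * xvar k q - xvar k (swapc p q m) * xvar k (swapc q p m).

Definition Bl (n : nat) (r : 'I_n -> nat) (l : 'I_n) : pred (box r) :=
  fun p => (p l : nat) == (r l).-1.

Definition Al (n : nat) (r : 'I_n -> nat) (l : 'I_n) : pred (box r) :=
  fun p => ((p l : nat) < (r l).-1)%N.

Definition Il_gens (k : fieldType) (n : nat) (r : 'I_n -> nat) (l : 'I_n)
  (f : polyA k r) : Prop :=
  minor2 (Al l) f \/ exists p, Bl l p /\ f = xvar k p.

Definition rhs_gens (k : fieldType) (n : nat) (r : 'I_n -> nat)
  (C : pred (box r)) (f : polyA k r) : Prop :=
  minor2 (fun _ => true) f \/ exists p, C p /\ f = xvar k p.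

From HB Require Import structures.
From mathcomp Require Import all_boot all_order all_algebra.
From mathcomp Require Import mpoly.
From mathcomp Require Import ring zify.
Set Implicit Arguments. Unset Strict Implicit. Unset Printing Implicit Defensive.
Import Order.TTheory GRing.Theory.
Local Open Scope ring_scope.

(* Read a monomial as a table whose rows are the box points of its variables,
   counted with multiplicity.  A 2x2 minor exchanges one coordinate between
   two rows, so two monomials whose tables have the same column multisets are
   congruent modulo I_2(A).  Sorting every column decreasingly gives a normal
   form nf m of m, and its linear extension nf_lin satisfies
   f - nf_lin f \in I_2(A).  nf_lin kills the minors of A_l, which do not change
   the columns, and sends u x_p with p in B_l to a normal form whose first row
   lies in B_l, since r_l is the largest l-th index.  So if f lies in every
   I_{l_j}, each monomial of nf_lin f meets every B_{l_j}; the first row of its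
   normal form then lies in the intersection of the B_{l_j}, whence f lies in
   I_2(A) + (x_p : p in that intersection).  Conversely, every 2x2 minor of A
   lies in each I_l. *)

Section IdealGen.
Variables (R : comNzRingType) (S : R -> Prop).

Lemma ideal_gen0 : ideal_gen S 0.
Proof. by exists [::]; rewrite big_nil. Qed.

Lemma mem_ideal_gen g : S g -> ideal_gen S g.
Proof.
move=> Sg; exists [:: (1, g)]; rewrite big_seq1 mul1r.
by split=> // c; rewrite inE => /eqP ->.
Qed.

Lemma ideal_genD x y : ideal_gen S x -> ideal_gen S y -> ideal_gen S (x + y).
Proof.
move=> [s [Ss ->]] [t [St ->]]; exists (s ++ t); rewrite big_cat.
by split=> // c; rewrite mem_cat => /orP [/Ss|/St].
Qed.

Lemma ideal_genMl a x : ideal_gen S x -> ideal_gen S (a * x).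
Proof.
move=> [s [Ss ->]]; exists [seq (a * c.1, c.2) | c <- s]; split.
  by move=> c /mapP [d /Ss Sd ->].
by rewrite big_map mulr_sumr; apply: eq_bigr => c _; rewrite mulrA.
Qed.

Lemma ideal_genMr a x : ideal_gen S x -> ideal_gen S (x * a).
Proof. by rewrite mulrC; apply: ideal_genMl. Qed.

Lemma ideal_genB x y : ideal_gen S x -> ideal_gen S y -> ideal_gen S (x - y).
Proof. by move=> Sx Sy; rewrite -mulN1r; apply/ideal_genD/ideal_genMl. Qed.

Lemma ideal_gen_sum (I : eqType) (s : seq I) (F : I -> R) :
  (forall i, i \in s -> ideal_gen S (F i)) -> ideal_gen S (\sum_(i <- s) F i).
Proof.
move=> SF; rewrite big_seq.
by apply: big_ind => //; [exact: ideal_gen0|exact: ideal_genD].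
Qed.

End IdealGen.

Lemma ideal_gen_sub (R : comNzRingType) (S T : R -> Prop) x :
  (forall g, S g -> ideal_gen T g) -> ideal_gen S x -> ideal_gen T x.
Proof.
by move=> ST [s [Ss ->]]; apply: ideal_gen_sum => c /Ss /ST; apply: ideal_genMl.
Qed.

Lemma perm_swap_cons (T : eqType) (a b : T) s1 s2 :
  perm_eq (a :: s1 ++ b :: s2) (b :: s1 ++ a :: s2).
Proof. by apply/permP => P /=; rewrite !count_cat /=; lia. Qed.

Section MnmSeq.
Variable T : finType.
Local Notation mon := 'X_{1..#|T|}.

Definition mnm_seq (m : mon) : seq T :=
  flatten [seq nseq (m (enum_rank x)) x | x <- enum T].

Lemma count_mnm_seq (P : pred T) m :
  count P (mnm_seq m) = (\sum_(x | P x) m (enum_rank x))%N.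
Proof.
rewrite count_flatten sumnE !big_map -enumT big_enum [RHS]big_mkcond /=.
by apply: eq_bigr => x _; rewrite count_nseq; case: (P x); rewrite ?mul1n.
Qed.

Lemma mnm_seq_inj m1 m2 : perm_eq (mnm_seq m1) (mnm_seq m2) -> m1 = m2.
Proof.
move=> /permP eq12; apply/mnmP => v; have := eq12 (pred1 (enum_val v)).
by rewrite !count_mnm_seq !big_pred1_eq enum_valK.
Qed.

Lemma mnm_seq0 : mnm_seq 0%MM = [::].
Proof.
apply: size0nil; rewrite -count_predT count_mnm_seq.
by rewrite big1 // => x _; rewrite mnm0E.
Qed.

Lemma mnm_seqD m1 m2 : perm_eq (mnm_seq (m1 + m2)%MM) (mnm_seq m1 ++ mnm_seq m2).
Proof.
apply/permP => P; rewrite count_cat !count_mnm_seq -big_split /=.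
by apply: eq_bigr => x _; rewrite mnmDE.
Qed.

Lemma mnm_seq1 x : perm_eq (mnm_seq U_(enum_rank x)) [:: x].
Proof.
apply/permP => P; rewrite count_mnm_seq big_mkcond (bigD1 x) //= mnm1E eqxx.
rewrite big1 => [|y /negbTE yx]; first by case: (P x).
by rewrite mnm1E (inj_eq enum_rank_inj) eq_sym yx if_same.
Qed.

Lemma mnm_seq_sum (s : seq T) :
  perm_eq (mnm_seq (\sum_(x <- s) U_(enum_rank x))%MM) s.
Proof.
elim: s => [|x s IHs]; first by rewrite big_nil mnm_seq0.
rewrite big_cons; apply: perm_trans (mnm_seqD _ _) _.
by rewrite -cat1s perm_cat ?mnm_seq1.
Qed.

Lemma mnm_seqK m : (\sum_(x <- mnm_seq m) U_(enum_rank x))%MM = m.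
Proof. exact/mnm_seq_inj/mnm_seq_sum. Qed.

Lemma mnm_seq_add2 u x y :
  perm_eq (mnm_seq (u + U_(enum_rank x) + U_(enum_rank y))%MM)
          (mnm_seq u ++ [:: x; y]).
Proof.
apply: perm_trans (mnm_seqD _ _) _; rewrite -cat1s catA.
apply: perm_cat (mnm_seq1 y); apply: perm_trans (mnm_seqD _ _) _.
by rewrite perm_cat2l mnm_seq1.
Qed.

End MnmSeq.

Section BoxTable.
Variables (k : fieldType) (n : nat) (r : 'I_n -> nat).
Local Notation B := (box r).
Local Notation R := (polyA k r).
Local Notation X := (xvar k).
Local Notation I2 := (ideal_gen (@minor2 k n r (fun _ => true))).

Definition prodX (s : seq B) : R := \prod_(p <- s) X p.

Definition column (j : 'I_n) (s : seq B) : seq 'I_(r j) := [seq p j | p : B <- s].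

Lemma swapcE (p q : B) m j : swapc p q m j = if j == m then q j else p j.
Proof. by rewrite ffunE. Qed.

Lemma I2_minor (p q : B) m : I2 (X p * X q - X (swapc p q m) * X (swapc q p m)).
Proof. by apply: mem_ideal_gen; exists p, q, m. Qed.

Lemma I2_prodX_head (q : B) (js : seq 'I_n) (s : seq B) : s != [::] ->
    (forall j, q j \in column j s) ->
  exists (p : B) (t : seq B), [/\ I2 (prodX s - prodX (p :: t)),
    forall j, perm_eq (column j s) (column j (p :: t)),
    size t = (size s).-1 & {in js, forall j, p j = q j}].
Proof.
move=> s_nil q_col; elim: js => [|j js [p [t [I2st col_st size_t pq]]]].
  case: s s_nil {q_col} => [//|p t] _; exists p, t.
  by split=> //; rewrite subrr; apply: ideal_gen0.
have [pqj|pqj] := eqVneq (p j) (q j).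
  by exists p, t; split=> // j'; rewrite inE => /predU1P [->|/pq].
have : q j \in column j (p :: t) by rewrite -(perm_mem (col_st j)) q_col.
rewrite inE eq_sym (negbTE pqj) => /mapP [y y_t qy].
case/splitPr: y_t I2st col_st size_t => t1 t2 I2st col_st size_t.
exists (swapc p y j), (t1 ++ swapc y p j :: t2); split.
- have -> : prodX s - prodX (swapc p y j :: t1 ++ swapc y p j :: t2) =
      (prodX s - prodX (p :: t1 ++ y :: t2)) +
      prodX t1 * prodX t2 * (X p * X y - X (swapc p y j) * X (swapc y p j)).
    by rewrite /prodX !big_cons !big_cat !big_cons /=; ring.
  by apply: ideal_genD => //; apply/ideal_genMl/I2_minor.
- move=> j'; apply: perm_trans (col_st j') _.
  rewrite /column /= !map_cat /= !swapcE.
  by case: eqP => [->|_] //; apply: perm_swap_cons.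
- by rewrite -size_t !size_cat.
- move=> j'; rewrite swapcE inE; case: eqP => [-> _ //|_]; exact: pq.
Qed.

Lemma I2_prodX_columns (s s' : seq B) : size s = size s' ->
  (forall j, perm_eq (column j s) (column j s')) -> I2 (prodX s - prodX s').
Proof.
elim: s' s => [|q s' IHs'] [|p1 t1] //.
  by rewrite subrr => *; apply: ideal_gen0.
move=> [size_t1] col_ss'.
have q_col j : q j \in column j (p1 :: t1).
  by rewrite (perm_mem (col_ss' j)) mem_head.
have [p [t [I2st col_st size_t pq]]] :=
  I2_prodX_head (enum 'I_n) (isT : p1 :: t1 != [::]) q_col.
have qp : q = p by apply/ffunP => j; rewrite pq ?mem_enum.
subst q.
have -> : prodX (p1 :: t1) - prodX (p :: s') =
    (prodX (p1 :: t1) - prodX (p :: t)) + X p * (prodX t - prodX s').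
  by rewrite /prodX !big_cons; ring.
apply/ideal_genD/ideal_genMl/IHs' => //; first by rewrite size_t.
by move=> j; have := col_ss' j; rewrite (permPl (col_st j)) /= perm_cons.
Qed.

Lemma mpolyX_prodX (m : 'X_{1..#|B|}) : 'X_[m] = prodX (mnm_seq m).
Proof. by rewrite -{1}(mnm_seqK m) -mprodXE. Qed.

End BoxTable.

Section NormalForm.
Variables (k : fieldType) (n : nat) (r : 'I_n -> nat) (p0 : box r).
Local Notation B := (box r).
Local Notation R := (polyA k r).
Local Notation I2 := (ideal_gen (@minor2 k n r (fun _ => true))).
Local Notation mon := 'X_{1..#|B|}.

Definition sorted_column j (m : mon) := sort >=%O (column j (mnm_seq m)).

Definition nf_row (m : mon) a : B := [ffun j => nth (p0 j) (sorted_column j m) a].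

Definition nf_rows (m : mon) := mkseq (nf_row m) (size (mnm_seq m)).

Definition nf (m : mon) : mon := (\sum_(p <- nf_rows m) U_(enum_rank p))%MM.

Lemma mpolyX_nf m : 'X_[nf m] = prodX k (nf_rows m) :> R.
Proof. by rewrite -mprodXE. Qed.

Lemma column_nf_rows j m : column j (nf_rows m) = sorted_column j m.
Proof.
have size_col : size (sorted_column j m) = size (mnm_seq m).
  by rewrite size_sort size_map.
rewrite -[RHS](mkseq_nth (p0 j)) size_col /column /nf_rows /mkseq -map_comp.
by apply: eq_map => a; rewrite /= ffunE.
Qed.

Lemma I2_nf m : I2 ('X_[m] - 'X_[nf m]).
Proof.
rewrite mpolyX_prodX mpolyX_nf; apply: I2_prodX_columns.
  by rewrite size_mkseq.
by move=> j; rewrite column_nf_rows perm_sym perm_sort.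
Qed.

Lemma nf_perm_columns m1 m2 : size (mnm_seq m1) = size (mnm_seq m2) ->
    (forall j, perm_eq (column j (mnm_seq m1)) (column j (mnm_seq m2))) ->
  nf m1 = nf m2.
Proof.
move=> size12 col12; rewrite /nf /nf_rows size12.
rewrite (eq_mkseq (g := nf_row m2)) // => a.
apply/ffunP => j; rewrite !ffunE /sorted_column.
by congr nth; apply/(perm_sortP ge_total ge_trans ge_anti)/col12.
Qed.

Lemma nf_minor u (p q : B) m :
  nf (u + U_(enum_rank p) + U_(enum_rank q))%MM =
  nf (u + U_(enum_rank (swapc p q m)) + U_(enum_rank (swapc q p m)))%MM.
Proof.
apply: nf_perm_columns.
  by rewrite !(perm_size (mnm_seq_add2 _ _ _)) !size_cat.
move=> j; rewrite /column (permPl (perm_map _ (mnm_seq_add2 _ _ _))).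
rewrite (permPr (perm_map _ (mnm_seq_add2 _ _ _))) !map_cat perm_cat2l /= !swapcE.
by case: eqP => _ //; apply/permP => P /=; lia.
Qed.

Definition meets l (m : mon) := has (Bl l) (mnm_seq m).

Lemma meets_addU l u (p : B) : Bl l p -> meets l (u + U_(enum_rank p))%MM.
Proof.
move=> lp; rewrite /meets (perm_has _ (mnm_seqD _ _)) has_cat.
by rewrite (perm_has _ (mnm_seq1 _)) /= lp orbT.
Qed.

Lemma nf_row0_Bl l m : meets l m -> Bl l (nf_row m 0).
Proof.
case/hasP => x x_m /eqP x_last; rewrite /Bl ffunE.
have : x l \in sorted_column l m by rewrite mem_sort; apply: map_f.
have := sort_sorted ge_total (column l (mnm_seq m)); rewrite -/(sorted_column l m).
case: (sorted_column l m) => [//|y ys] /= sorted_ys.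
have y_max := allP (order_path_min ge_trans sorted_ys).
rewrite inE => /predU1P [<-|/y_max]; first by rewrite x_last.
by rewrite /= leEord x_last; have := ltn_ord y; lia.
Qed.

Lemma mem_nf_row0 l m : meets l m -> nf_row m 0 \in nf_rows m.
Proof.
case/hasP => x x_m _; rewrite /nf_rows.
by case: (mnm_seq m) x_m => [//|y s] _; rewrite /mkseq /= mem_head.
Qed.

Lemma meets_nf l m : meets l m -> meets l (nf m).
Proof.
move=> lm; apply/hasP; exists (nf_row m 0); last exact: nf_row0_Bl.
by rewrite (perm_mem (mnm_seq_sum _)) (mem_nf_row0 lm).
Qed.

End NormalForm.

Lemma sum_msupp_sub (N : nat) (R : nzRingType) (V : lmodType R)
    (f : {mpoly R[N]}) (G : 'X_{1..N} -> V) (s : seq 'X_{1..N}) :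
    uniq s -> {subset msupp f <= s} ->
  \sum_(m <- msupp f) f@_m *: G m = \sum_(m <- s) f@_m *: G m.
Proof.
move=> uniq_s supp_s; rewrite [RHS](bigID (mem (msupp f))) /=.
rewrite [X in _ + X]big1 ?addr0 => [|m /memN_msupp_eq0 ->]; last by rewrite scale0r.
rewrite -[RHS]big_filter; apply/perm_big/uniq_perm.
- exact: msupp_uniq.
- exact: filter_uniq.
- by move=> m; rewrite mem_filter andb_idr //; apply: supp_s.
Qed.

Section NormalFormLinear.
Variables (k : fieldType) (n : nat) (r : 'I_n -> nat) (p0 : box r).
Local Notation R := (polyA k r).
Local Notation I2 := (ideal_gen (@minor2 k n r (fun _ => true))).
Local Notation nf := (nf p0).

Definition nf_lin (f : R) : R := \sum_(m <- msupp f) f@_m *: 'X_[nf m].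

Lemma nf_lin_is_linear : linear nf_lin.
Proof.
move=> c f g; pose s := undup (msupp f ++ msupp g).
have uniq_s : uniq s by apply: undup_uniq.
have supp_f : {subset msupp f <= s} by move=> m fm; rewrite mem_undup mem_cat fm.
have supp_g : {subset msupp g <= s}.
  by move=> m gm; rewrite mem_undup mem_cat gm orbT.
have supp_cfg : {subset msupp (c *: f + g) <= s}.
  by move=> m /msuppD_le; rewrite mem_cat => /orP [/msuppZ_le/supp_f|/supp_g].
rewrite /nf_lin !(sum_msupp_sub _ uniq_s) // scaler_sumr -big_split.
by apply: eq_bigr => m _; rewrite mcoeffD mcoeffZ scalerDl scalerA.
Qed.

HB.instance Definition _ :=
  GRing.isLinear.Build k R R *:%R nf_lin nf_lin_is_linear.

Lemma nf_linX m : nf_lin 'X_[m] = 'X_[nf m].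
Proof. by rewrite /nf_lin msuppX big_seq1 mcoeffX eqxx scale1r. Qed.

Lemma I2_sub_nf_lin f : I2 (f - nf_lin f).
Proof.
rewrite {1}[f]mpolyE /nf_lin -sumrB; apply: ideal_gen_sum => m _.
by rewrite -scalerBr -mul_mpolyC; apply/ideal_genMl/I2_nf.
Qed.

End NormalFormLinear.

Section Intersection.
Variables (k : fieldType) (n : nat) (r : 'I_n -> nat).
Local Notation B := (box r).
Local Notation R := (polyA k r).
Local Notation X := (xvar k).
Local Notation I2 := (ideal_gen (@minor2 k n r (fun _ => true))).

Lemma minor_in_Il l (p q : B) m :
  ideal_gen (Il_gens l) (X p * X q - X (swapc p q m) * X (swapc q p m)).
Proof.
have Il_X x : Bl l x -> ideal_gen (Il_gens l) (X x).
  by move=> lx; apply: mem_ideal_gen; right; exists x.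
have notAl_Bl x : ~~ Al l x -> Bl l x.
  by rewrite /Al /Bl -leqNgt => x_ge; have := ltn_ord (x l); lia.
wlog p_last : p q / Bl l p.
  move=> wlog_p; have [Al_p|/notAl_Bl] := boolP (Al l p); last exact: wlog_p.
  have [Al_q|/notAl_Bl q_last] := boolP (Al l q).
    by apply: mem_ideal_gen; left; exists p, q, m.
  by rewrite mulrC [X (swapc p q m) * _]mulrC; apply: wlog_p.
apply: ideal_genB; first exact/ideal_genMr/Il_X.
have [ml|ml] := eqVneq l m.
  by apply/ideal_genMl/Il_X; rewrite /Bl swapcE ml eqxx -ml.
by apply/ideal_genMr/Il_X; rewrite /Bl swapcE (negbTE ml).
Qed.

Lemma rhs_sub_Il l (C : pred B) (f : R) : (forall p, C p -> Bl l p) ->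
  ideal_gen (rhs_gens C) f -> ideal_gen (Il_gens l) f.
Proof.
move=> C_Bl; apply: ideal_gen_sub => g.
case=> [[p [q [m [_ [_ ->]]]]]|[p [/C_Bl lp ->]]].
  exact: minor_in_Il.
by apply: mem_ideal_gen; right; exists p.
Qed.

Lemma I2_sub_rhs (C : pred B) f : I2 f -> ideal_gen (rhs_gens C) f.
Proof. by apply: ideal_gen_sub => g I2g; apply: mem_ideal_gen; left. Qed.

Variable p0 : B.
Local Notation nf := (nf p0).
Local Notation nf_row := (nf_row p0).
Local Notation nf_lin := (nf_lin p0).

Definition supp_meets l (h : R) := forall m, m \in msupp h -> meets l m.

Lemma supp_meets_nf_lin_gen l u g :
  Il_gens l g -> supp_meets l (nf_lin ('X_[u] * g)).
Proof.
case=> [[p [q [j [_ [_ ->]]]]]|[p [lp ->]]].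
  rewrite mulrBr !mulrA -!mpolyXD linearB /= !nf_linX (nf_minor p0 _ _ _ j) subrr.
  by move=> m; rewrite msupp0.
rewrite -mpolyXD nf_linX => m /[!msuppX] /[!inE] /eqP ->.
exact/meets_nf/meets_addU.
Qed.

Lemma supp_meets_nf_lin l f : ideal_gen (Il_gens l) f -> supp_meets l (nf_lin f).
Proof.
have supp0 : supp_meets l 0 by move=> m; rewrite msupp0.
have suppD h1 h2 : supp_meets l h1 -> supp_meets l h2 -> supp_meets l (h1 + h2).
  by move=> s1 s2 m /msuppD_le; rewrite mem_cat => /orP [/s1|/s2].
case=> s [s_gen ->]; rewrite linear_sum big_seq.
apply: big_ind => // c /s_gen gen_c.
rewrite [c.1]mpolyE mulr_suml linear_sum; apply: big_ind => // u _.
by rewrite -scalerAl linearZ => m /msuppZ_le; apply: supp_meets_nf_lin_gen.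
Qed.

Lemma mpolyX_in_rhs (C : pred B) l m : meets l m -> C (nf_row m 0) ->
  ideal_gen (rhs_gens C) ('X_[m] : R).
Proof.
move=> lm C_row0; rewrite -(subrK 'X_[nf m] 'X_[m]); apply: ideal_genD.
  exact/I2_sub_rhs/I2_nf.
rewrite mpolyX_nf /prodX (big_rem _ (mem_nf_row0 p0 lm)) /=.
by apply/ideal_genMr/mem_ideal_gen; right; exists (nf_row m 0).
Qed.

End Intersection.

Lemma Il_bigcap (k : fieldType) (n : nat) (r : 'I_n -> nat) (I : finType)
    (L : I -> 'I_n) (C : pred (box r)) :
    (forall j, 0 < r j)%N -> (0 < #|I|)%N ->
    C =1 (fun p => [forall i, Bl (L i) p]) ->
  forall f : polyA k r,
    (forall i, ideal_gen (Il_gens (L i)) f) <-> ideal_gen (rhs_gens C) f.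
Proof.
move=> r_gt0 /card_gt0P [i0 _] CE f; split=> [f_Il|f_rhs i]; last first.
  by apply: rhs_sub_Il f_rhs => p; rewrite CE => /forallP.
pose p0 : box r := [ffun j => Ordinal (r_gt0 j)].
rewrite -(subrK (nf_lin p0 f) f); apply: ideal_genD.
  exact/I2_sub_rhs/I2_sub_nf_lin.
rewrite [nf_lin p0 f]mpolyE; apply: ideal_gen_sum => m supp_m.
rewrite -mul_mpolyC; apply: ideal_genMl.
have meets_m i : meets (L i) m := supp_meets_nf_lin (f_Il i) supp_m.
apply: (mpolyX_in_rhs k (p0 := p0) (meets_m i0)); rewrite CE; apply/forallP => i.
exact: nf_row0_Bl.
Qed.

Theorem lemma1p1 (k : fieldType) (n : nat) (r : 'I_n -> nat) :
  (2 <= n)%N -> (forall j, (0 < r j)%N) ->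
  (forall l s : 'I_n, l != s -> forall f : polyA k r,
     (ideal_gen (Il_gens l) f /\ ideal_gen (Il_gens s) f) <->
     ideal_gen (rhs_gens (fun p => Bl l p && Bl s p)) f)
  /\
  (forall (t : nat) (L : 'I_t -> 'I_n), (2 <= t <= n)%N -> injective L ->
     forall f : polyA k r,
     (forall j : 'I_t, ideal_gen (Il_gens (L j)) f) <->
     ideal_gen (rhs_gens (fun p => [forall j : 'I_t, Bl (L j) p])) f).
Proof.
move=> _ r_gt0; split=> [l s _ f|t L /andP [t_gt1 _] _ f]; last first.
  by apply: Il_bigcap => //; rewrite card_ord; lia.
pose Lls (b : bool) := if b then l else s.
have Lls_and (p : box r) : Bl l p && Bl s p = [forall b, Bl (Lls b) p].
  apply/andP/forallP => [[lp sp] []|Lp] //.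
  by split; [exact: Lp true|exact: Lp false].
have card_bool_gt0 : (0 < #|{: bool}|)%N by rewrite card_bool.
apply: (iff_trans _ (Il_bigcap r_gt0 card_bool_gt0 Lls_and f)).
split=> [[Il_f Is_f] []|Ilp_f] //.
by split; [exact: Ilp_f true|exact: Ilp_f false].
Qed.
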